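(* Let $f\colon\prod_{i\in[n]}X_i\to Y$ and let $\varphi_k\colon X_k\to Y$ ($k\in[n]$) be maps satisfying the boundary condition $\varphi_k(0_{X_k})\le\varphi_k(x_k)\le\varphi_k(1_{X_k})$ for all $x_k\in X_k$. Suppose that for every $k\in[n]$ and every $\mathbf{x}\in\prod_{i\in[n]}X_i$, $$f(\mathbf{x})=\operatorname{med}\big(f(\mathbf{x}_k^0),\varphi_k(x_k),f(\mathbf{x}_k^1)\big).$$ Then $f(\mathbf{x})=p_0(\varphi_1(x_1),\ldots,\varphi_n(x_n))$ for all $\mathbf{x}$, where $p_0\colon Y^n\to Y$ is the polynomial function $$p_0(y_1,\ldots,y_n)=\bigvee_{I\subseteq[n]}\Big(f(\widehat{\mathbf{1}}_I)\wedge\bigwedge_{i\in I}y_i\Big).$$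
   Context: $Y$ is a finite distributive lattice with operations $\wedge,\vee$, least element $0$ and greatest element $1$. $[n]=\{1,\ldots,n\}$. $X_1,\ldots,X_n$ are arbitrary sets with at least two elements, and in each $X_k$ two distinct elements $0_{X_k},1_{X_k}$ (written $0,1$) are fixed. For $\mathbf{x}\in\prod_{i\in[n]}X_i$ and $a\in X_k$, $\mathbf{x}_k^a$ denotes the tuple agreeing with $\mathbf{x}$ except that its $k$-th component is $a$. For $I\subseteq[n]$, $\widehat{\mathbf{1}}_I\in\prod_{i\in[n]}X_i$ is the tuple whose $i$-th component is $1_{X_i}$ if $i\in I$ and $0_{X_i}$ otherwise. $\operatorname{med}(y_1,y_2,y_3)=(y_1\wedge y_2)\vee(y_2\wedge y_3)\vee(y_3\wedge y_1)$. An empty meet $\bigwedge_{i\in\emptyset}y_i$ equals $1$. *)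

From HB Require Import structures.
From mathcomp Require Import all_boot all_order.
Set Implicit Arguments. Unset Strict Implicit. Unset Printing Implicit Defensive.
Import Order.TTheory.
Local Open Scope order_scope.

Definition med {d} {Y : latticeType d} (y1 y2 y3 : Y) : Y :=
  (y1 `&` y2) `|` (y2 `&` y3) `|` (y3 `&` y1).

Definition upd {n : nat} {X : 'I_n -> Type} (x : forall i, X i) (k : 'I_n) (a : X k)
  : forall i, X i := @dfwith _ X x k a.

Definition hat1 {n : nat} {X : 'I_n -> Type} (x0 x1 : forall i, X i) (I : {set 'I_n})
  : forall i, X i := fun i => if i \in I then x1 i else x0 i.

Definition p0 {d} {Y : finTBDistrLatticeType d} {n : nat} {X : 'I_n -> Type}
  (x0 x1 : forall i, X i) (f : (forall i, X i) -> Y) (y : 'I_n -> Y) : Y :=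
  \join_(I : {set 'I_n}) (f (hat1 x0 x1 I) `&` \meet_(i in I) y i).
Arguments upd {n X} x k a _.

From HB Require Import structures.
From mathcomp Require Import all_boot all_order.
From Stdlib Require Import FunctionalExtensionality.
Import Order.TTheory.
Local Open Scope order_scope.

(* Write y_i = phi_i(x_i).  Since phi_k(0) <= phi_k(1), the
   median identity applied at x_k^0 and x_k^1 shows f(x_k^0) <= f(x_k^1),
   so the median collapses to a one-variable Shannon-type expansion
     f(x) = f(x_k^0) \/ (y_k /\ f(x_k^1)).
   For a set S of coordinates and J a subset of S, let [assign S J x] set the
   coordinates of S to 1 (on J) or 0 (on S \ J) and keep x elsewhere.  We prove
   the invariant
     f(x) = \/_{I} ( f(assign S (I /\ S) x) /\ /\_{i in I /\ S} y_i )
   for every S: it is trivial for S = {} and the Shannon expansion in one new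
   coordinate k turns the expansion for S into the one for S + {k}.  For S
   the full index set, assign S I x is the tuple 1_I, which is exactly p_0. *)

Lemma med_le d (Y : distrLatticeType d) (a y b : Y) : a <= b ->
  med a y b = a `|` (y `&` b).
Proof.
move=> ab; rewrite /med (meet_idPr ab).
apply: le_anti; rewrite !leUx leUr leUl !andbT /=.
by rewrite (lexUl _ (leIl _ _)) leUr (lexUl _ (leUr _ _)).
Qed.

Lemma med_mono d (Y : latticeType d) (a p q b : Y) : p <= q ->
  med a p b <= med a q b.
Proof. by move=> pq; rewrite /med !leU2 ?leI2. Qed.

Lemma setD1_id (T : finType) (A : {set T}) (k : T) : k \notin A -> A :\ k = A.
Proof. by move=> kA; apply/setDidPl; rewrite disjoint_sym disjoints1. Qed.

Lemma joins_split_elem d (Y : bJoinSemilatticeType d) (T : finType)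
  (g : {set T} -> Y) (k : T) :
  \join_(I : {set T}) (g (I :\ k) `|` g (k |: I)) = \join_(I : {set T}) g I.
Proof.
apply: le_anti; apply/andP; split.
  by apply/joinsP => I _; rewrite leUx !(joins_sup (j := _)).
apply/joinsP => I _; apply: (joins_min (j := I)) => //.
have [kI | kI] := boolP (k \in I).
  by rewrite (setUidPr _) ?sub1set // leUr.
by rewrite setD1_id // leUl.
Qed.

Lemma upd_upd n (X : 'I_n -> Type) (z : forall i, X i) k (a b : X k) :
  upd (upd z k a) k b = upd z k b.
Proof.
apply: functional_extensionality_dep => i; rewrite /upd.
by case: (eqVneq k i) => [<-|ki]; rewrite ?dfwith_in ?dfwith_out.
Qed.

Definition assign {n} {X : 'I_n -> Type} (x0 x1 : forall i, X i)
  (S J : {set 'I_n}) (x : forall i, X i) : forall i, X i :=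
  fun i => if i \in S then (if i \in J then x1 i else x0 i) else x i.

Section Assign.
Variables (n : nat) (X : 'I_n -> Type) (x0 x1 x : forall i, X i).

Lemma assign_set0 (J : {set 'I_n}) : assign x0 x1 set0 J x = x.
Proof. by apply: functional_extensionality_dep => i; rewrite /assign inE. Qed.

Lemma assign_setT (J : {set 'I_n}) : assign x0 x1 setT J x = hat1 x0 x1 J.
Proof. by apply: functional_extensionality_dep => i; rewrite /assign inE. Qed.

Lemma upd_assign0 (S J : {set 'I_n}) (k : 'I_n) :
  upd (assign x0 x1 S J x) k (x0 k) = assign x0 x1 (k |: S) (J :\ k) x.
Proof.
apply: functional_extensionality_dep => i; rewrite /assign /upd.
case: (eqVneq k i) => [<-|ki]; first by rewrite dfwith_in !inE eqxx.
by rewrite dfwith_out // !inE (eq_sym i) (negbTE ki).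
Qed.

Lemma upd_assign1 (S J : {set 'I_n}) (k : 'I_n) :
  upd (assign x0 x1 S J x) k (x1 k) = assign x0 x1 (k |: S) (k |: J) x.
Proof.
apply: functional_extensionality_dep => i; rewrite /assign /upd.
case: (eqVneq k i) => [<-|ki]; first by rewrite dfwith_in !inE eqxx.
by rewrite dfwith_out // !inE (eq_sym i) (negbTE ki).
Qed.
End Assign.

Section Expansion.
Variables (d : Order.disp_t) (Y : finTBDistrLatticeType d) (n : nat)
  (X : 'I_n -> Type) (x0 x1 : forall i, X i)
  (f : (forall i, X i) -> Y) (phi : forall k : 'I_n, X k -> Y).
Hypothesis hbound :
  forall (k : 'I_n) (a : X k), phi k (x0 k) <= phi k a <= phi k (x1 k).
Hypothesis hmed : forall (k : 'I_n) (x : forall i, X i),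
  f x = med (f (upd x k (x0 k))) (phi k (x k)) (f (upd x k (x1 k))).

Lemma f_upd_le (k : 'I_n) (z : forall i, X i) :
  f (upd z k (x0 k)) <= f (upd z k (x1 k)).
Proof.
rewrite (hmed k (upd z k (x0 k))) (hmed k (upd z k (x1 k))) !upd_upd.
apply: med_mono; rewrite /upd !dfwith_in.
by case/andP: (hbound k (x1 k)).
Qed.

Lemma f_shannon (k : 'I_n) (z : forall i, X i) :
  f z = f (upd z k (x0 k)) `|` (phi k (z k) `&` f (upd z k (x1 k))).
Proof. by rewrite {1}(hmed k z) med_le ?f_upd_le. Qed.

Variable x : forall i, X i.

Definition term (S I : {set 'I_n}) : Y :=
  f (assign x0 x1 S (I :&: S) x) `&` \meet_(i in I :&: S) phi i (x i).

Definition expansion (S : {set 'I_n}) : Y := \join_(I : {set 'I_n}) term S I.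

Lemma expansion_set0 : f x = expansion set0.
Proof.
rewrite /expansion /term; apply: le_anti; apply/andP; split.
  by apply: (joins_min (j := set0)); rewrite // setI0 big_set0 meetx1 assign_set0.
by apply/joinsP => I _; rewrite setI0 assign_set0 leIl.
Qed.

Lemma term_split (S I : {set 'I_n}) (k : 'I_n) : k \notin S ->
  term S I = term (k |: S) (I :\ k) `|` term (k |: S) (k |: I).
Proof.
move=> kS; rewrite /term; set z := assign x0 x1 S (I :&: S) x.
have kIS : k \notin I :&: S by rewrite inE (negbTE kS) andbF.
have -> : (I :\ k) :&: (k |: S) = (I :&: S) :\ k.
  by apply/setP => i; rewrite !inE; case: (eqVneq i k).
have -> : (k |: I) :&: (k |: S) = k |: (I :&: S).
  by apply/setP => i; rewrite !inE; case: (eqVneq i k).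
rewrite -upd_assign0 -upd_assign1 -/z setD1_id //.
rewrite big_setU1 //= {1}(f_shannon k z) meetUl meetCA meetA.
by rewrite /z /assign (negbTE kS).
Qed.

Lemma expansion_setU1 (S : {set 'I_n}) (k : 'I_n) : k \notin S ->
  expansion S = expansion (k |: S).
Proof.
move=> kS; rewrite /expansion -(joins_split_elem _ _ _ (term (k |: S)) k).
by apply: eq_bigr => I _; rewrite (term_split S I k kS).
Qed.

Lemma f_expansion (S : {set 'I_n}) : f x = expansion S.
Proof.
move: {2}#|S| (erefl #|S|) => m; elim: m S => [|m IH] S cardS.
  by rewrite (cards0_eq cardS) expansion_set0.
have [k kS] : exists k, k \in S by apply/set0Pn; rewrite -card_gt0 cardS.
have cardSk : #|S :\ k| = m by move: cardS; rewrite (cardsD1 k S) kS => -[].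
by rewrite -(setD1K kS) -expansion_setU1 ?setD11 // (IH _ cardSk).
Qed.
End Expansion.

Theorem mainTheorem1 (d : Order.disp_t) (Y : finTBDistrLatticeType d) (n : nat)
  (X : 'I_n -> Type) (x0 x1 : forall i, X i) (hx01 : forall i, x0 i <> x1 i)
  (f : (forall i, X i) -> Y) (phi : forall k : 'I_n, X k -> Y)
  (hbound : forall (k : 'I_n) (a : X k), phi k (x0 k) <= phi k a <= phi k (x1 k))
  (hmed : forall (k : 'I_n) (x : forall i, X i),
     f x = med (f (upd x k (x0 k))) (phi k (x k)) (f (upd x k (x1 k)))) :
  forall x : forall i, X i, f x = p0 x0 x1 f (fun i => phi i (x i)).
Proof.
move=> x; rewrite (f_expansion _ _ _ _ _ _ _ _ hbound hmed x setT) /expansion /p0.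
by apply: eq_bigr => I _; rewrite /term setIT assign_setT.
Qed.
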